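(* Let $m,n$ be indeterminates and work in the ring of formal power series $\mathbb{Q}[m,n][[x]]$. Let $$f(x)=\sum_{k\ge 0}(-1)^k\, m(m+n)(m+2n)\cdots(m+(k-1)n)\,x^k = 1-mx+m(m+n)x^2-m(m+n)(m+2n)x^3+\cdots$$ (the empty product for $k=0$ being $1$). Define $c_{2j-1}=(m+(j-1)n)x$ and $c_{2j}=jn\,x$ for $j\ge 1$, so that $c_1=mx,\ c_2=nx,\ c_3=(m+n)x,\ c_4=2nx,\ c_5=(m+2n)x,\dots$, and for $N\ge 1$ let $$K_N=\cfrac{1}{1+\cfrac{c_1}{1+\cfrac{c_2}{1+\cdots+\cfrac{c_N}{1}}}}.$$ Then each $K_N$ is a rational function in $x$ whose expansion is a power series in $\mathbb{Q}[m,n][[x]]$, and $K_N\equiv f(x)\pmod{x^{N+1}}$. Consequently $K_N\to f$ in the $x$-adic topology, i.e. $f$ equals the infinite continued fraction $$f=\cfrac{1}{1+\cfrac{mx}{1+\cfrac{nx}{1+\cfrac{(m+n)x}{1+\cfrac{2nx}{1+\cfrac{(m+2n)x}{1+\cfrac{3nx}{1+\cdots}}}}}}}$$ in this formal sense.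
   Context: The series $f$ is divergent for every nonzero numerical $x$ (unless $m=0$), so the identity is understood as an identity of formal power series: the finite truncations $K_N$ of the continued fraction, expanded as power series in $x$, agree with $f$ up to and including the coefficient of $x^N$. *)

(* Formal power series in x are represented by their
   coefficient functions  nat -> R  (coefficient of x^k). *)
From HB Require Import structures.
From mathcomp Require Import all_boot all_order all_algebra.
Set Implicit Arguments. Unset Strict Implicit. Unset Printing Implicit Defensive.
Import Order.TTheory GRing.Theory Num.Theory.
Local Open Scope ring_scope.

Section PowerSeries.
Variable R : comUnitRingType.

Definition series := nat -> R.

Definition ps1 : series := fun k => if k == 0%N then 1 else 0.
Definition psadd (f g : series) : series := fun k => f k + g k.
Definition psmul (f g : series) : series :=
  fun k => \sum_(i < k.+1) f i * g (k - i)%N.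
Definition psmonX (a : R) : series := fun k => if k == 1%N then a else 0.

(* coefficients b_0..b_k of the multiplicative inverse of f (meaningful
   when f 0 is a unit, e.g. f 0 = 1):
   b_0 = (f 0)^-1,  b_k = -(f 0)^-1 * sum_{i=1..k} f_i b_{k-i}. *)
Fixpoint invl (f : series) (k : nat) : seq R :=
  match k with
  | 0 => [:: (f 0%N)^-1]
  | k'.+1 => let s := invl f k' in
      rcons s (- (f 0%N)^-1 * \sum_(i < k) f i.+1 * nth 0 s (k' - i)%N)
  end.
Definition psinv (f : series) : series := fun k => nth 0 (invl f k) k.

(* cf_tail a j L = 1 + a_j x / (1 + a_{j+1} x / ( ... / (1 + a_{j+L-1} x / 1)))
   (L partial numerators a_j x, ..., a_{j+L-1} x). *)
Fixpoint cf_tail (a : nat -> R) (j L : nat) : series :=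
  match L with
  | 0 => ps1
  | L'.+1 => psadd ps1 (psmul (psmonX (a j)) (psinv (cf_tail a j.+1 L')))
  end.

Definition cfK (a : nat -> R) (N : nat) : series := psinv (cf_tail a 1 N).

(* c_{2j-1} = (m + (j-1) n) x,  c_{2j} = j n x   (j >= 1) *)
Definition acoef (m n : R) (i : nat) : R :=
  if odd i then m + (i./2)%:R * n else (i./2)%:R * n.

Definition fseries (m n : R) : series :=
  fun k => (-1) ^+ k * \prod_(i < k) (m + i%:R * n).

End PowerSeries.

(* Q[m,n] realised as Q[m][n] = {poly {poly rat}}:  m = polyC 'X, n = 'X *)
Definition QmnT := {poly {poly rat}}.
Definition mvar : QmnT := ('X)%:P.
Definition nvar : QmnT := 'X.

From HB Require Import structures.
From mathcomp Require Import all_boot all_order all_algebra ring.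
Set Implicit Arguments. Unset Strict Implicit. Unset Printing Implicit Defensive.
Import GRing.Theory.
Local Open Scope ring_scope.

(* Proof idea (a contraction argument of Euler type).  Suppose a family of
   power series H_0, H_1, ... with constant term 1 satisfies
        H_j = H_{j+1} + a_{j+1} x H_{j+2}                          (R)
   and H_0 = 1.  Then H_j / H_{j+1} = 1 + a_{j+1} x / (H_{j+1} / H_{j+2}),
   and unfolding L times shows that the truncated tail
   1 + a_{j+1} x / (1 + ... / (1 + a_{j+L} x / 1)) agrees with
   H_j / H_{j+1} modulo x^(L+1); for j = 0 this says K_N = H_1 mod x^(N+1).
   For the coefficients c_i of the theorem, (R) is solved by the
   hypergeometric series
      H_j = sum_k (-1)^k binom(u+k-1, k) (m+hn)(m+(h+1)n)...(m+(h+k-1)n) x^k,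
   with u = ceil(j/2), h = floor(j/2); then H_0 = 1 and H_1 = f. *)

Section PowerSeriesAlgebra.
Variable R : comUnitRingType.
Implicit Types f g h : series R.

Definition ps_eqmod (L : nat) f g := forall k, (k <= L)%N -> f k = g k.

(* The polynomial truncation f mod x^n, used to transfer ring laws from
   polynomials to the Cauchy product. *)
Definition trunc (n : nat) f : {poly R} := \poly_(i < n) f i.

Lemma psmul_trunc f g k n : (k < n)%N -> psmul f g k = (trunc n f * trunc n g)`_k.
Proof.
move=> lt_kn; rewrite /psmul coefM; apply: eq_bigr => i _; rewrite !coef_poly.
have -> : (i < n)%N by apply: leq_ltn_trans lt_kn; rewrite -ltnS.
by have -> : (k - i < n)%N by apply: leq_ltn_trans lt_kn; apply: leq_subr.
Qed.

Lemma psmul_eqmodr f g g' k : ps_eqmod k g g' -> psmul f g k = psmul f g' k.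
Proof. by move=> eq_g; apply: eq_bigr => i _; rewrite eq_g // leq_subr. Qed.

Lemma psmulC f g k : psmul f g k = psmul g f k.
Proof. by rewrite !(@psmul_trunc _ _ k k.+1) // mulrC. Qed.

Lemma psmul_eqmodl f f' g k : ps_eqmod k f f' -> psmul f g k = psmul f' g k.
Proof. by move=> eq_f; rewrite psmulC (psmulC f'); apply: psmul_eqmodr. Qed.

Lemma psmulA f g h k : psmul (psmul f g) h k = psmul f (psmul g h) k.
Proof.
have trunc_mulA u v w : (trunc k.+1 (psmul u v) * trunc k.+1 w)`_k
                       = (trunc k.+1 u * trunc k.+1 v * trunc k.+1 w)`_k.
  rewrite !coefM; apply: eq_bigr => i _; congr (_ * _).
  by rewrite coef_poly ltnS (leq_ord i) (@psmul_trunc _ _ i k.+1).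
rewrite !(@psmul_trunc _ _ k k.+1) // trunc_mulA [in RHS]mulrC trunc_mulA.
by rewrite [in RHS]mulrC mulrA.
Qed.

Lemma psmulDl f g h k : psmul (psadd f g) h k = psmul f h k + psmul g h k.
Proof. by rewrite /psmul -big_split; apply: eq_bigr => i _; rewrite mulrDl. Qed.

Lemma psmul1 h k : psmul (ps1 R) h k = h k.
Proof.
rewrite /psmul big_ord_recl /= mul1r subn0 big1 ?addr0 // => i _.
by rewrite mul0r.
Qed.

Lemma psmulX a g k : psmul (psmonX a) g k = if k is k'.+1 then a * g k' else 0.
Proof.
rewrite /psmul /psmonX; case: k => [|k].
  by rewrite big_ord_recl big_ord0 /= mul0r addr0.
rewrite !big_ord_recl /= mul0r add0r subSS subn0 big1 ?addr0 // => i _.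
by rewrite mul0r.
Qed.

Lemma size_invl f k : size (invl f k) = k.+1.
Proof. by elim: k => //= k IH; rewrite size_rcons IH. Qed.

Lemma nth_invl f k i : (i <= k)%N -> nth 0 (invl f k) i = psinv f i.
Proof.
elim: k => [|k IH]; first by rewrite leqn0 => /eqP ->.
rewrite leq_eqVlt => /orP [/eqP -> //|]; rewrite ltnS => le_ik /=.
by rewrite nth_rcons size_invl ltnS le_ik; apply: IH.
Qed.

Lemma psinvS f k :
  psinv f k.+1 = - (f 0%N)^-1 * \sum_(i < k.+1) f i.+1 * psinv f (k - i)%N.
Proof.
rewrite /psinv /= nth_rcons size_invl ltnn eqxx; congr (_ * _).
by apply: eq_bigr => i _; rewrite nth_invl // leq_subr.
Qed.

Lemma psmulV f k : f 0%N = 1 -> psmul f (psinv f) k = ps1 R k.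
Proof.
move=> f0; case: k => [|k].
  by rewrite /psmul big_ord_recl big_ord0 /= /psinv /= f0 invr1 mulr1 addr0.
rewrite /psmul big_ord_recl /= f0 mul1r subn0 psinvS f0 invr1 mulN1r /ps1 /=.
rewrite addrC; apply/eqP; rewrite subr_eq0; apply/eqP.
by apply: eq_bigr => i _; rewrite subSS.
Qed.

Lemma psinv_eqmod (C G1 G2 : series R) L : C 0%N = 1 ->
  ps_eqmod L (psmul C G1) G2 -> ps_eqmod L (psmul (psinv C) G2) G1.
Proof.
move=> C0 eqCG k le_kL.
rewrite (@psmul_eqmodr _ _ (psmul C G1)); last first.
  by move=> i le_ik; rewrite eqCG // (leq_trans le_ik le_kL).
rewrite -psmulA (@psmul_eqmodl _ (ps1 R)) ?psmul1 //.
by move=> i _; rewrite psmulC psmulV.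
Qed.

Lemma cf_tail0 (a : nat -> R) j L : cf_tail a j L 0%N = 1.
Proof. by case: L => [|L] //=; rewrite /psadd psmulX addr0. Qed.

End PowerSeriesAlgebra.

Section Contraction.
Variable R : comUnitRingType.
Variable a : nat -> R.
Variable H : nat -> series R.
Hypothesis H_const : forall j, H j 0%N = 1.
Hypothesis H_rec : forall j k, H j k = H j.+1 k + psmul (psmonX (a j.+1)) (H j.+2) k.

Lemma cf_tail_eqmod L j : ps_eqmod L (psmul (cf_tail a j.+1 L) (H j.+1)) (H j).
Proof.
elim: L j => [|L IH] j k.
  by rewrite leqn0 => /eqP ->; rewrite psmul1 !H_const.
move=> le_kL /=; rewrite psmulDl psmul1 psmulA psmulX [RHS]H_rec psmulX.
case: k le_kL => [|k] le_kL //; congr (_ + (_ * _)).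
exact: (psinv_eqmod (cf_tail0 _ _ _) (IH j.+1)).
Qed.

Lemma cfK_eqmod N : ps_eqmod N (H 0%N) (ps1 R) -> ps_eqmod N (cfK a N) (H 1%N).
Proof.
move=> H0_one k le_kN; rewrite /cfK -(@psinv_eqmod _ (cf_tail a 1 N) (H 1%N) (ps1 R) N) //.
- by rewrite psmulC psmul1.
- exact: cf_tail0.
by move=> i le_iN; rewrite cf_tail_eqmod // H0_one.
Qed.

End Contraction.

Section HypergeometricSolution.
Variable R : comUnitRingType.
Variables m n : R.

Definition hyp (u h k : nat) : R :=
  (-1) ^+ k * ('C(u + k - 1, k))%:R * \prod_(l < k) (m + (h + l)%:R * n).

Lemma hyp0 u h : hyp u h 0 = 1.
Proof. by rewrite /hyp expr0 bin0 big_ord0 !mul1r. Qed.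

Lemma hyp_prodS h k :
  \prod_(l < k.+1) (m + (h + l)%:R * n)
    = (m + h%:R * n) * \prod_(l < k) (m + (h.+1 + l)%:R * n).
Proof.
rewrite big_ord_recl addn0; congr (_ * _).
by apply: eq_bigr => l _; rewrite lift0 addnS addSn.
Qed.

Lemma hyp_rec_even i k :
  hyp i i k.+1 = hyp i.+1 i k.+1 + (m + i%:R * n) * hyp i.+1 i.+1 k.
Proof.
rewrite /hyp !hyp_prodS !addnS !addSn !subn1 /= binS.
set Q := \prod_(l < k) _; rewrite natrD exprS; ring.
Qed.

(* The recurrence (R) at an odd index 2i+1, where a_{2i+2} = (i+1) n; it
   rests on the identity (i+1) binom(i+k+1, k) = (k+1) binom(i+k+1, k+1). *)
Lemma hyp_rec_odd i k :
  hyp i.+1 i k.+1 = hyp i.+1 i.+1 k.+1 + (i.+1%:R * n) * hyp i.+2 i.+1 k.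
Proof.
rewrite /hyp hyp_prodS big_ord_recr /= !addSn !addnS !subn1 /=.
have bin_id : (i.+1)%:R * ('C((i + k).+1, k))%:R
            = (k.+1)%:R * ('C((i + k).+1, k.+1))%:R :> R.
  by rewrite -!natrM mul_bin_left subSn ?leq_addl // addnK.
set Q := \prod_(l < k) _; move: bin_id.
set C0 := ('C(_, k))%:R; set C1 := ('C(_, k.+1))%:R => bin_id.
apply/eqP; rewrite -subr_eq0; apply/eqP.
transitivity ((-1) ^+ k * n * Q * ((k.+1)%:R * C1 - (i.+1)%:R * C0)).
  by rewrite exprS -[(i + k).+1%:R]natr1 natrD; ring.
by rewrite bin_id subrr mulr0.
Qed.

Definition Hsol (j : nat) : series R := hyp (uphalf j) j./2.

Lemma Hsol_const j : Hsol j 0 = 1.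
Proof. exact: hyp0. Qed.

Lemma Hsol_rec j k :
  Hsol j k = Hsol j.+1 k + psmul (psmonX (acoef m n j.+1)) (Hsol j.+2) k.
Proof.
rewrite psmulX; case: k => [|k]; first by rewrite !Hsol_const addr0.
rewrite /Hsol /acoef -(odd_double_half j); case: (odd j); move: j./2 => i.
- by rewrite /= uphalf_double doubleK /= odd_double hyp_rec_odd.
- by rewrite /= add0n uphalf_double doubleK /= odd_double /= hyp_rec_even.
Qed.

(* H_0 = 1 (binom(k-1, k) = 0 for k > 0) and H_1 = f (binom(k, k) = 1). *)
Lemma Hsol_zero k : Hsol 0 k = ps1 R k.
Proof.
case: k => [|k]; first exact: hyp0.
by rewrite /Hsol /hyp /= add0n subn1 /= bin_small // mulr0 mul0r.
Qed.

Lemma Hsol_one k : Hsol 1 k = fseries m n k.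
Proof.
rewrite /Hsol /hyp /fseries /= add1n subn1 /= binn mulr1.
by congr (_ * _); apply: eq_bigr => l _; rewrite add0n.
Qed.

End HypergeometricSolution.

Theorem mainTheorem1 :
  (forall N k : nat, (1 <= N)%N -> (k <= N)%N ->
     cfK (acoef mvar nvar) N k = fseries mvar nvar k) /\
  (forall k : nat, exists N0 : nat, forall N : nat, (N0 <= N)%N ->
     cfK (acoef mvar nvar) N k = fseries mvar nvar k).
Proof.
have convergent_eq N : ps_eqmod N (cfK (acoef mvar nvar) N) (fseries mvar nvar).
  move=> k le_kN; rewrite -Hsol_one.
  apply: (cfK_eqmod (@Hsol_const _ _ _) (@Hsol_rec _ _ _)) => // i _.
  exact: Hsol_zero.
split=> [N k _ | k]; first exact: convergent_eq.
by exists k => N; apply: convergent_eq.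
Qed.
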